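(* Let $a>1$ and $b>1$ be irrational numbers, let $a_n=[an]$, $b_n=[bn]$, $a'_n=[a^{-1}n]$ and $b'_n=[b^{-1}n]$. Then for every positive integer $k$ the series $\sum_{n=1}^\infty \left( \frac{a_{n+k}}{a_n}-\frac{b_{n+k}}{b_n} \right)$ converges and \begin{align*} \sum_{n=1}^\infty \left( \frac{a_{n+k}}{a_n}-\frac{b_{n+k}}{b_n} \right)=\;& k\left( \log a -\log b\right) + \sum_{j=1}^{k}\left(\left\{ j\{ a \}\right\} - \left\{ j\{ b \}\right\}\right)\\ &-\sum_{n=1}^{\infty} \frac{ak\{ a^{-1} (n+1) \}-bk\{ b^{-1} (n+1) \}}{n(n+1)}\\ &-\sum_{n=1}^{\infty} \frac{\sum_{j=1}^k\{ \{ a\} (a'_{n+1}+j) \}-\sum_{j=1}^k\{ \{ b\} (b'_{n+1}+j) \}}{n(n+1)}. \end{align*}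
   Context: $[x]$ is the greatest integer not exceeding $x$ and $\{x\}=x-[x]$. *)

From Stdlib Require Import Reals Lra.
From Coquelicot Require Import Coquelicot.
Open Scope R_scope.

(* [x] : greatest integer not exceeding x (Int_part x = up x - 1 is the floor). *)
Definition flr (x : R) : R := IZR (Int_part x).

Definition frac (x : R) : R := x - flr x.

Definition irrational (x : R) : Prop :=
  forall p q : Z, q <> 0%Z -> x <> IZR p / IZR q.

Fixpoint sum1 (k : nat) (f : nat -> R) : R :=
  match k with
  | O => 0
  | S k' => sum1 k' f + f (S k')
  end.

From Stdlib Require Import Reals Lra Lia ZArith.
From Coquelicot Require Import Coquelicot.
Open Scope R_scope.

(* For [c > 1] irrational put [t_n = [c (n + k)] / [c n] - 1], and let [A(M) = [(M + 1) / c]]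
   be the number of [n >= 1] with [[c n] <= M].  The partial sum of [t_n] over [n <= A(M)]
   equals an explicit expression in [M], [A(M)], the harmonic number [H_(M-1)] and the
   fractional-part terms of the statement: going from [M] to [M + 1] the expression does not
   change unless [A] jumps to [p + 1], and then irrationality gives [[c (p + 1)] = M + 1], which
   makes the increment exactly [t_(p+1)] (the fractional parts telescope over [j]).  Taking
   [M = [c N]], so that [A(M) = N], yields [sum_(n <= N) t_n = k H_[cN] + C_c + o(1)].
   Subtracting the expansion for [b], [H_[aN] - H_[bN] -> log a - log b]. *)

Lemma flr_unique (x : R) (z : Z) : IZR z <= x < IZR z + 1 -> flr x = IZR z.
Proof.
  intros [Hlo Hhi]. unfold flr, Int_part.
  assert (Hup : up x = (z + 1)%Z) by (symmetry; apply tech_up; rewrite plus_IZR; lra).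
  rewrite Hup. f_equal. lia.
Qed.

Lemma flr_bounds (x : R) : flr x <= x < flr x + 1.
Proof. unfold flr. destruct (base_Int_part x). lra. Qed.

Lemma frac_bounds (x : R) : 0 <= frac x < 1.
Proof. unfold frac. destruct (flr_bounds x). lra. Qed.

Lemma flr_add_IZR (x : R) (z : Z) : flr (x + IZR z) = flr x + IZR z.
Proof.
  unfold flr at 2. rewrite <- plus_IZR. apply flr_unique.
  rewrite plus_IZR. fold (flr x). destruct (flr_bounds x). lra.
Qed.

Lemma flr_mul_INR (c : R) (p : nat) : flr (c * INR p) = c * INR p - frac (frac c * INR p).
Proof.
  replace (c * INR p) with (frac c * INR p + IZR (Int_part c * Z.of_nat p))
    by (rewrite mult_IZR, <- INR_IZR_INZ; unfold frac, flr; ring).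
  rewrite flr_add_IZR. unfold frac. ring.
Qed.

Lemma irrational_mul_INR_neq (c : R) (n m : nat) :
  irrational c -> (0 < n)%nat -> c * INR n <> INR m.
Proof.
  intros Hirr Hn E. apply (Hirr (Z.of_nat m) (Z.of_nat n)); [lia|].
  rewrite <- !INR_IZR_INZ, <- E. field. apply not_0_INR. lia.
Qed.

Definition nflr (x : R) : nat := Z.to_nat (Int_part x).

Lemma INR_nflr (x : R) : 0 <= x -> INR (nflr x) = flr x.
Proof.
  intros Hx. unfold nflr, flr. rewrite INR_IZR_INZ. f_equal. apply Z2Nat.id.
  destruct (base_Int_part x).
  assert (IZR (-1) < IZR (Int_part x)) as Hlt by lra.
  apply lt_IZR in Hlt. lia.
Qed.

Lemma nflr_eq (x : R) (n : nat) : INR n <= x < INR n + 1 -> nflr x = n.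
Proof.
  intros Hx. unfold nflr.
  assert (Hf : flr x = IZR (Z.of_nat n)) by (apply flr_unique; rewrite <- INR_IZR_INZ; exact Hx).
  apply eq_IZR in Hf. rewrite Hf. apply Nat2Z.id.
Qed.

Lemma sum1_minus (f g : nat -> R) (p : nat) :
  sum1 p (fun n => f n - g n) = sum1 p f - sum1 p g.
Proof. induction p as [|p IH]; cbn [sum1]; [ring | rewrite IH; ring]. Qed.

Lemma sum1_ext (f g : nat -> R) (p : nat) : (forall n, f n = g n) -> sum1 p f = sum1 p g.
Proof.
  intros Hfg. induction p as [|p IH]; cbn [sum1]; [reflexivity | rewrite IH, Hfg; reflexivity].
Qed.

Lemma sum1_shift_telescope (g : R -> R) (x : R) (k : nat) :
  sum1 k (fun j => g (x + 1 + INR j)) - sum1 k (fun j => g (x + INR j))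
  = g (x + 1 + INR k) - g (x + 1).
Proof.
  induction k as [|k IH]; cbn [sum1].
  - simpl INR. rewrite Rplus_0_r. ring.
  - replace (x + INR (S k)) with (x + 1 + INR k) by (rewrite S_INR; ring). lra.
Qed.

Lemma sum1_frac_bounds (k : nat) (f : nat -> R) : 0 <= sum1 k (fun j => frac (f j)) <= INR k.
Proof.
  induction k as [|k IH]; cbn [sum1].
  - simpl. lra.
  - destruct (frac_bounds (f (S k))). rewrite S_INR. lra.
Qed.

Definition harmonic (p : nat) : R := sum1 p (fun m => / INR m).

(* For irrational [c > 1], [beatty_count c M] is the number of [n >= 1] with [[c n] <= M]. *)
Definition beatty_count (c : R) (M : nat) : nat := nflr (/ c * INR (S M)).

Definition ratio_term (c : R) (k n : nat) : R := flr (c * INR (n + k)) / flr (c * INR n) - 1.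

Definition frac_block (c : R) (k m : nat) : R :=
  sum1 k (fun j => frac (frac c * (INR (beatty_count c m) + INR j))).

Definition v_term (c : R) (k m : nat) : R :=
  c * INR k * frac (/ c * (INR m + 1)) / (INR m * (INR m + 1)).

Definition w_term (c : R) (k m : nat) : R := frac_block c k m / (INR m * (INR m + 1)).

Definition closed_form (c : R) (k M : nat) : R :=
  c * INR k * INR (beatty_count c M) / INR M + INR k * harmonic (M - 1)
  - sum1 (M - 1) (v_term c k) + frac_block c k 0
  - sum1 M (w_term c k) - frac_block c k M / (INR M + 1).

Section BeattyCount.

Variables (c : R) (k : nat).
Hypothesis c_gt1 : 1 < c.

Let inv_c_bounds : 0 < / c < 1.
Proof.
  split; [apply Rinv_0_lt_compat; lra|].
  rewrite <- Rinv_1. apply Rinv_1_lt_contravar; lra.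
Qed.

Lemma INR_beatty_count (M : nat) : INR (beatty_count c M) = flr (/ c * INR (S M)).
Proof. apply INR_nflr. apply Rmult_le_pos; [lra | apply pos_INR]. Qed.

Lemma beatty_count_0 : beatty_count c 0 = 0%nat.
Proof. apply nflr_eq. simpl. lra. Qed.

Lemma beatty_count_nflr (N : nat) : beatty_count c (nflr (c * INR N)) = N.
Proof.
  apply nflr_eq. rewrite S_INR, INR_nflr by (apply Rmult_le_pos; [lra | apply pos_INR]).
  destruct (flr_bounds (c * INR N)).
  assert (/ c * (flr (c * INR N) + 1) <= / c * (c * INR N) + / c) by nra.
  assert (/ c * (c * INR N) < / c * (flr (c * INR N) + 1)) by nra.
  replace (/ c * (c * INR N)) with (INR N) in * by (field; lra).
  lra.
Qed.

Lemma nflr_mul_bounds (N : nat) :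
  (S N <= nflr (c * INR (S N)))%nat /\
  c * INR (S N) - 1 < INR (nflr (c * INR (S N))) <= c * INR (S N).
Proof.
  rewrite INR_nflr by (apply Rmult_le_pos; [lra | apply pos_INR]).
  destruct (flr_bounds (c * INR (S N))). split; [|lra].
  apply INR_le. rewrite INR_nflr by (apply Rmult_le_pos; [lra | apply pos_INR]).
  rewrite (INR_IZR_INZ (S N)) at 1. unfold flr. apply IZR_le.
  destruct (base_Int_part (c * INR (S N))).
  assert (Hlt : IZR (Z.of_nat (S N) - 1) < IZR (Int_part (c * INR (S N)))).
  { rewrite minus_IZR, <- INR_IZR_INZ. pose proof (pos_INR (S N)). nra. }
  apply lt_IZR in Hlt. lia.
Qed.

Lemma frac_block_0 : frac_block c k 0 = sum1 k (fun j => frac (INR j * frac c)).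
Proof.
  unfold frac_block. rewrite beatty_count_0. apply sum1_ext. intros j.
  rewrite Rplus_0_l, Rmult_comm. reflexivity.
Qed.

Lemma closed_form_0 : closed_form c k 0 = 0.
Proof.
  unfold closed_form, harmonic. rewrite beatty_count_0. simpl. cbn [sum1].
  unfold Rdiv. rewrite Rplus_0_l, Rinv_1. ring.
Qed.

Lemma closed_form_succ (M : nat) :
  closed_form c k (S M) - closed_form c k M =
  (c * INR k * (INR (beatty_count c (S M)) - INR (beatty_count c M))
   - (frac_block c k (S M) - frac_block c k M)) / (INR M + 1).
Proof.
  destruct M as [|p].
  - unfold closed_form, w_term, harmonic. rewrite beatty_count_0. simpl. cbn [sum1].
    unfold Rdiv. rewrite Rinv_0. field.
  - unfold closed_form. replace (S (S p) - 1)%nat with (S p) by lia.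
    replace (S p - 1)%nat with p by lia.
    unfold harmonic. cbn [sum1]. unfold v_term, w_term.
    assert (Hfrac : frac (/ c * (INR (S p) + 1)) = / c * (INR (S p) + 1) - INR (beatty_count c (S p)))
      by (rewrite INR_beatty_count, (S_INR (S p)); unfold frac; ring).
    rewrite Hfrac, (S_INR (S p)).
    assert (0 < INR (S p)) by (apply lt_0_INR; lia).
    field. lra.
Qed.

Lemma ratio_term_jump (p M : nat) : flr (c * INR (S p)) = INR (S M) ->
  ratio_term c k (S p) =
  (c * INR k - (frac (frac c * (INR p + 1 + INR k)) - frac (frac c * (INR p + 1)))) / (INR M + 1).
Proof.
  intros Hjump. unfold ratio_term. rewrite Hjump.
  pose proof (flr_mul_INR c (S p)) as Hp. rewrite Hjump in Hp.
  rewrite flr_mul_INR, plus_INR. rewrite !S_INR in Hp |- *.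
  assert (HM : INR M + 1 <> 0) by (pose proof (pos_INR M); lra).
  apply (Rmult_eq_reg_r (INR M + 1)); [|exact HM].
  unfold Rdiv. rewrite Rmult_minus_distr_r, !Rmult_assoc, Rinv_l by exact HM. lra.
Qed.

Hypothesis c_irrational : irrational c.

Lemma beatty_count_succ (M : nat) :
  beatty_count c (S M) = beatty_count c M \/
  (beatty_count c (S M) = S (beatty_count c M) /\
   flr (c * INR (S (beatty_count c M))) = INR (S M)).
Proof.
  set (p := beatty_count c M).
  assert (Hp : INR p <= / c * INR (S M) < INR p + 1)
    by (unfold p; rewrite INR_beatty_count; apply flr_bounds).
  assert (Hnext : / c * INR (S (S M)) = / c * INR (S M) + / c) by (rewrite (S_INR (S M)); ring).
  destruct (Rlt_le_dec (/ c * INR (S (S M))) (INR p + 1)) as [Hstay | Hjump].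
  - left. apply nflr_eq. lra.
  - right. split; [apply nflr_eq; rewrite S_INR; lra|].
    rewrite (INR_IZR_INZ (S M)). apply flr_unique. rewrite <- INR_IZR_INZ.
    assert (INR (S M) < c * INR (S p)).
    { rewrite (S_INR p). replace (INR (S M)) with (c * (/ c * INR (S M))) by (field; lra).
      apply Rmult_lt_compat_l; lra. }
    assert (c * INR (S p) <= INR (S (S M))).
    { rewrite (S_INR p). replace (INR (S (S M))) with (c * (/ c * INR (S (S M)))) by (field; lra).
      apply Rmult_le_compat_l; lra. }
    pose proof (irrational_mul_INR_neq c (S p) (S (S M)) c_irrational ltac:(lia)).
    rewrite (S_INR (S M)) in *. lra.
Qed.

Lemma closed_form_eq_sum (M : nat) : closed_form c k M = sum1 (beatty_count c M) (ratio_term c k).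
Proof.
  induction M as [|M IH]; [rewrite closed_form_0, beatty_count_0; reflexivity|].
  pose proof (closed_form_succ M) as Hsucc.
  destruct (beatty_count_succ M) as [Hstay | [Hnext Hjump]].
  - assert (frac_block c k (S M) = frac_block c k M) as Hblock
      by (unfold frac_block; rewrite Hstay; reflexivity).
    rewrite Hstay, Hblock, !Rminus_diag, Rmult_0_r, Rminus_0_r, Rdiv_0_l in Hsucc.
    rewrite Hstay, <- IH. lra.
  - set (p := beatty_count c M) in *.
    assert (Hblock : frac_block c k (S M) - frac_block c k M =
      frac (frac c * (INR p + 1 + INR k)) - frac (frac c * (INR p + 1))).
    { unfold frac_block. rewrite Hnext. fold p. rewrite S_INR.
      apply (sum1_shift_telescope (fun y => frac (frac c * y))). }
    rewrite Hnext. cbn [sum1]. rewrite <- IH, (ratio_term_jump p M Hjump).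
    rewrite Hblock, Hnext, S_INR in Hsucc. lra.
Qed.

End BeattyCount.

Lemma Rdiv_le_bounds (P Q X n : R) : 0 <= P <= Q -> 0 < n <= X -> 0 <= P / X <= Q / n.
Proof.
  intros [HP HPQ] [Hn HnX]. unfold Rdiv.
  assert (0 < / X) by (apply Rinv_0_lt_compat; lra).
  split; [apply Rmult_le_pos; lra|].
  apply Rmult_le_compat; try lra. apply Rinv_le_contravar; lra.
Qed.

Lemma is_lim_seq_inv_INR_S : is_lim_seq (fun N => / INR (S N)) 0.
Proof.
  apply (is_lim_seq_incr_1 (fun N => / INR N)).
  replace (Finite 0) with (Rbar_inv p_infty) by reflexivity.
  apply is_lim_seq_inv; [apply is_lim_seq_INR | discriminate].
Qed.

Lemma is_lim_seq_of_O_inv (x : nat -> R) (l C : R) :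
  (forall N, Rabs (x N - l) <= C / INR (S N)) -> is_lim_seq x l.
Proof.
  intros Hx.
  assert (HC : is_lim_seq (fun N => C * / INR (S N)) 0).
  { replace (Finite 0) with (Finite (C * 0)) by (f_equal; ring).
    apply (is_lim_seq_scal_l _ C 0), is_lim_seq_inv_INR_S. }
  apply (is_lim_seq_le_le (fun N => l - C * / INR (S N)) _ (fun N => l + C * / INR (S N))).
  - intros N. specialize (Hx N). apply Rabs_le_between in Hx. unfold Rdiv in Hx. lra.
  - replace (Finite l) with (Rbar_minus l 0) by (simpl; f_equal; ring).
    apply is_lim_seq_minus'; [apply is_lim_seq_const | exact HC].
  - replace (Finite l) with (Rbar_plus l 0) by (simpl; f_equal; ring).
    apply is_lim_seq_plus'; [apply is_lim_seq_const | exact HC].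
Qed.

Lemma ln_diff_bounds (X Y : R) : 0 < X <= Y -> (Y - X) / Y <= ln Y - ln X <= (Y - X) / X.
Proof.
  intros [HX HXY].
  assert (ln_le : forall z, 0 < z -> ln z <= z - 1).
  { intros z Hz. pose proof (exp_ineq1_le (ln z)). rewrite exp_ln in * by lra. lra. }
  pose proof (ln_le (X / Y) ltac:(apply Rdiv_lt_0_compat; lra)).
  pose proof (ln_le (Y / X) ltac:(apply Rdiv_lt_0_compat; lra)).
  rewrite ln_div in * by lra.
  replace ((Y - X) / Y) with (- (X / Y - 1)) by (field; lra).
  replace ((Y - X) / X) with (Y / X - 1) by (field; lra). lra.
Qed.

Definition harmonic_minus_ln (p : nat) : R := harmonic p - ln (INR p).

Lemma harmonic_minus_ln_succ (n : nat) : (1 <= n)%nat ->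
  0 <= harmonic_minus_ln n - harmonic_minus_ln (S n) <= / INR n - / INR (S n).
Proof.
  intros Hn. unfold harmonic_minus_ln, harmonic. cbn [sum1].
  assert (0 < INR n) by (apply lt_0_INR; lia).
  pose proof (ln_diff_bounds (INR n) (INR (S n)) ltac:(rewrite S_INR; lra)) as Hln.
  replace (INR (S n) - INR n) with 1 in Hln by (rewrite S_INR; ring).
  unfold Rdiv in Hln. rewrite !Rmult_1_l in Hln. lra.
Qed.

Lemma harmonic_minus_ln_add (q d : nat) : (1 <= q)%nat ->
  0 <= harmonic_minus_ln q - harmonic_minus_ln (q + d) <= / INR q - / INR (q + d).
Proof.
  intros Hq. induction d as [|d IH]; [rewrite Nat.add_0_r; lra|].
  pose proof (harmonic_minus_ln_succ (q + d) ltac:(lia)).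
  replace (q + S d)%nat with (S (q + d)) by lia. lra.
Qed.

Lemma harmonic_minus_ln_close (p q : nat) : (1 <= p)%nat -> (1 <= q)%nat ->
  Rabs (harmonic_minus_ln p - harmonic_minus_ln q) <= / INR p + / INR q.
Proof.
  intros Hp Hq.
  assert (0 < / INR p) by (apply Rinv_0_lt_compat, lt_0_INR; lia).
  assert (0 < / INR q) by (apply Rinv_0_lt_compat, lt_0_INR; lia).
  apply Rabs_le. destruct (Nat.le_ge_cases q p).
  - destruct (harmonic_minus_ln_add q (p - q) Hq).
    replace (q + (p - q))%nat with p in * by lia. lra.
  - destruct (harmonic_minus_ln_add p (q - p) Hp).
    replace (p + (q - p))%nat with q in * by lia. lra.
Qed.

Lemma sum_n_succ_sum1 (f : nat -> R) (p : nat) : sum_n (fun n => f (S n)) p = sum1 (S p) f.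
Proof.
  induction p as [|p IH]; [rewrite sum_O; simpl; ring|].
  rewrite sum_Sn, IH. reflexivity.
Qed.

Lemma is_lim_seq_sum1_Series (f : nat -> R) :
  ex_series (fun n => f (S n)) -> is_lim_seq (fun p => sum1 p f) (Series (fun n => f (S n))).
Proof.
  intros Hf. apply is_lim_seq_incr_1.
  apply (is_lim_seq_ext (sum_n (fun n => f (S n)))); [intros; apply sum_n_succ_sum1|].
  exact (Series_correct _ Hf).
Qed.

Lemma is_lim_seq_sum1_subseq (f : nat -> R) (L : R) (phi : nat -> nat) :
  is_lim_seq (fun p => sum1 p f) L -> (forall N, (N <= phi N)%nat) ->
  is_lim_seq (fun N => sum1 (phi N) f) L.
Proof.
  intros Hf Hphi. apply (is_lim_seq_subseq (fun p => sum1 p f) L phi); [|exact Hf].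
  intros P [N HN]. exists N. intros n Hn. apply HN. specialize (Hphi n). lia.
Qed.

Lemma ex_series_O_inv_sq (f : nat -> R) (C : R) : 0 <= C ->
  (forall m, (1 <= m)%nat -> Rabs (f m) <= C / (INR m * (INR m + 1))) ->
  ex_series (fun n => f (S n)).
Proof.
  intros HC Hf.
  set (g := fun n => C / (INR (S n) * (INR (S n) + 1))).
  apply (@ex_series_le R_AbsRing R_CompleteNormedModule _ g); [intros n; apply Hf; lia|].
  exists C.
  assert (Htele : forall N, sum_n g N = C - C / INR (S (S N))).
  { unfold g. induction N as [|N IH]; [rewrite sum_O; simpl; field|].
    rewrite sum_Sn, IH. change plus with Rplus.
    rewrite (S_INR (S (S N))), (S_INR (S N)), (S_INR N).
    pose proof (pos_INR N). match goal with |- ?A = ?B => change (@eq R A B) end.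
    field. lra. }
  change (is_lim_seq (sum_n g) C).
  apply (is_lim_seq_ext (fun N => C - C / INR (S (S N)))); [intros; symmetry; apply Htele|].
  apply (is_lim_seq_of_O_inv _ _ C). intros N.
  replace (C - C / INR (S (S N)) - C) with (- (C / INR (S (S N)))) by ring.
  rewrite Rabs_Ropp, Rabs_pos_eq;
    destruct (Rdiv_le_bounds C C (INR (S (S N))) (INR (S N))); try lra.
  all: split; [apply lt_0_INR; lia | apply le_INR; lia].
Qed.

Definition ratio_sum_constant (c : R) (k : nat) : R :=
  INR k - Series (fun n => v_term c k (S n)) + frac_block c k 0
  - Series (fun n => w_term c k (S n)).

Section Asymptotics.

Variables (c : R) (k : nat).
Hypothesis c_gt1 : 1 < c.

Lemma ex_series_v_term : ex_series (fun n => v_term c k (S n)).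
Proof.
  apply (ex_series_O_inv_sq _ (c * INR k)); [pose proof (pos_INR k); nra|].
  intros m Hm. unfold v_term.
  assert (0 < INR m) by (apply lt_0_INR; lia).
  pose proof (pos_INR k). destruct (frac_bounds (/ c * (INR m + 1))).
  assert (Hck : 0 <= c * INR k) by nra.
  assert (0 <= c * INR k * frac (/ c * (INR m + 1)) <= c * INR k).
  { split; [apply Rmult_le_pos; lra|].
    rewrite <- (Rmult_1_r (c * INR k)) at 2. apply Rmult_le_compat_l; lra. }
  destruct (Rdiv_le_bounds (c * INR k * frac (/ c * (INR m + 1))) (c * INR k)
    (INR m * (INR m + 1)) (INR m * (INR m + 1))); [lra | nra |].
  rewrite Rabs_pos_eq; lra.
Qed.

Lemma ex_series_w_term : ex_series (fun n => w_term c k (S n)).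
Proof.
  apply (ex_series_O_inv_sq _ (INR k)); [apply pos_INR|].
  intros m Hm. unfold w_term.
  assert (0 < INR m) by (apply lt_0_INR; lia).
  destruct (Rdiv_le_bounds (frac_block c k m) (INR k) (INR m * (INR m + 1)) (INR m * (INR m + 1)));
    [apply sum1_frac_bounds | nra |].
  rewrite Rabs_pos_eq; lra.
Qed.

Lemma closed_form_boundary_terms :
  is_lim_seq (fun N => let M := nflr (c * INR (S N)) in
    c * INR k * INR (S N) / INR M - INR k / INR M - frac_block c k M / (INR M + 1)) (INR k).
Proof.
  apply (is_lim_seq_of_O_inv _ _ (2 * INR k)). intros N. cbv zeta.
  set (M := nflr (c * INR (S N))).
  destruct (nflr_mul_bounds c c_gt1 N) as [HSN [Hlo Hhi]]. fold M in HSN, Hlo, Hhi.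
  apply le_INR in HSN.
  assert (0 < INR (S N)) by (apply lt_0_INR; lia).
  pose proof (pos_INR k).
  destruct (Rdiv_le_bounds (INR k * (INR M + 1 - c * INR (S N))) (INR k) (INR M) (INR (S N)))
    as [Hgap_lo Hgap_hi]; [split; nra | lra |].
  destruct (Rdiv_le_bounds (frac_block c k M) (INR k) (INR M + 1) (INR (S N)))
    as [Hblock_lo Hblock_hi]; [apply sum1_frac_bounds | lra |].
  replace (c * INR k * INR (S N) / INR M - INR k / INR M - frac_block c k M / (INR M + 1) - INR k)
    with (- (INR k * (INR M + 1 - c * INR (S N)) / INR M) - frac_block c k M / (INR M + 1))
    by (field; lra).
  apply Rabs_le. unfold Rdiv in *. lra.
Qed.

Hypothesis c_irrational : irrational c.

(* Evaluating the closed form at [M = [c (N + 1)]], where the count equals [N + 1]. *)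
Lemma sum_ratio_terms_asymptotics :
  is_lim_seq (fun N => sum1 (S N) (ratio_term c k) - INR k * harmonic (nflr (c * INR (S N))))
    (ratio_sum_constant c k).
Proof.
  set (Mseq := fun N => nflr (c * INR (S N))).
  assert (HMseq : forall N, (S N <= Mseq N)%nat) by (intros N; apply (nflr_mul_bounds c c_gt1)).
  apply (is_lim_seq_ext (fun N =>
    (c * INR k * INR (S N) / INR (Mseq N) - INR k / INR (Mseq N)
     - frac_block c k (Mseq N) / (INR (Mseq N) + 1))
    - sum1 (Mseq N - 1) (v_term c k) + frac_block c k 0 - sum1 (Mseq N) (w_term c k))).
  - intros N. fold (Mseq N).
    assert (Hcount : beatty_count c (Mseq N) = S N) by apply (beatty_count_nflr c c_gt1).
    rewrite <- Hcount at 2. rewrite <- closed_form_eq_sum by assumption.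
    unfold closed_form. rewrite Hcount. specialize (HMseq N). destruct (Mseq N) as [|M]; [lia|].
    replace (S M - 1)%nat with M by lia. unfold harmonic. cbn [sum1]. unfold Rdiv. ring.
  - apply is_lim_seq_minus'; [apply is_lim_seq_plus'; [apply is_lim_seq_minus'|]|].
    + exact closed_form_boundary_terms.
    + apply is_lim_seq_sum1_subseq; [apply is_lim_seq_sum1_Series, ex_series_v_term|].
      intros N. specialize (HMseq N). lia.
    + apply is_lim_seq_const.
    + apply is_lim_seq_sum1_subseq; [apply is_lim_seq_sum1_Series, ex_series_w_term|].
      intros N. specialize (HMseq N). lia.
Qed.

End Asymptotics.

Lemma ln_nflr_mul_close (c : R) (N : nat) : 1 < c ->
  Rabs (ln (INR (nflr (c * INR (S N)))) - ln (c * INR (S N))) <= / INR (S N).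
Proof.
  intros Hc. destruct (nflr_mul_bounds c Hc N) as [HSN [Hlo Hhi]].
  apply le_INR in HSN.
  assert (0 < INR (S N)) by (apply lt_0_INR; lia).
  destruct (ln_diff_bounds (INR (nflr (c * INR (S N)))) (c * INR (S N))) as [_ Hln]; [lra|].
  destruct (Rdiv_le_bounds (c * INR (S N) - INR (nflr (c * INR (S N)))) 1
    (INR (nflr (c * INR (S N)))) (INR (S N))) as [_ Hgap]; [lra | lra |].
  assert (ln (INR (nflr (c * INR (S N)))) <= ln (c * INR (S N))) by (apply ln_le; lra).
  rewrite Rabs_minus_sym, Rabs_pos_eq by lra. unfold Rdiv in Hgap. lra.
Qed.

Lemma harmonic_nflr_diff_lim (a b : R) : 1 < a -> 1 < b ->
  is_lim_seq (fun N => harmonic (nflr (a * INR (S N))) - harmonic (nflr (b * INR (S N))))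
    (ln a - ln b).
Proof.
  intros Ha Hb. apply (is_lim_seq_of_O_inv _ _ 4). intros N.
  destruct (nflr_mul_bounds a Ha N) as [HMa _]. destruct (nflr_mul_bounds b Hb N) as [HMb _].
  assert (0 < INR (S N)) by (apply lt_0_INR; lia).
  pose proof (harmonic_minus_ln_close (nflr (a * INR (S N))) (nflr (b * INR (S N)))
    ltac:(lia) ltac:(lia)) as Hgap.
  pose proof (ln_nflr_mul_close a N Ha) as Hln_a.
  pose proof (ln_nflr_mul_close b N Hb) as Hln_b.
  assert (Hln : ln (a * INR (S N)) - ln (b * INR (S N)) = ln a - ln b)
    by (rewrite !ln_mult by lra; ring).
  assert (/ INR (nflr (a * INR (S N))) <= / INR (S N))
    by (apply Rinv_le_contravar; [lra | apply le_INR; exact HMa]).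
  assert (/ INR (nflr (b * INR (S N))) <= / INR (S N))
    by (apply Rinv_le_contravar; [lra | apply le_INR; exact HMb]).
  unfold harmonic_minus_ln in Hgap. unfold Rdiv.
  apply Rabs_le_between in Hgap. apply Rabs_le_between in Hln_a. apply Rabs_le_between in Hln_b.
  apply Rabs_le. lra.
Qed.

Lemma is_series_ratio_term_diff (a b : R) (k : nat) :
  1 < a -> 1 < b -> irrational a -> irrational b ->
  is_series (fun n => ratio_term a k (S n) - ratio_term b k (S n))
    (ratio_sum_constant a k - ratio_sum_constant b k + INR k * (ln a - ln b)).
Proof.
  intros Ha Hb Hia Hib.
  change (is_lim_seq (sum_n (fun n => ratio_term a k (S n) - ratio_term b k (S n)))
    (ratio_sum_constant a k - ratio_sum_constant b k + INR k * (ln a - ln b))).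
  apply (is_lim_seq_ext (fun N =>
    (sum1 (S N) (ratio_term a k) - INR k * harmonic (nflr (a * INR (S N))))
    - (sum1 (S N) (ratio_term b k) - INR k * harmonic (nflr (b * INR (S N))))
    + INR k * (harmonic (nflr (a * INR (S N))) - harmonic (nflr (b * INR (S N)))))).
  - intros N. rewrite (sum_n_succ_sum1 (fun n => ratio_term a k n - ratio_term b k n)), sum1_minus.
    ring.
  - apply is_lim_seq_plus'; [apply is_lim_seq_minus'|].
    + apply sum_ratio_terms_asymptotics; assumption.
    + apply sum_ratio_terms_asymptotics; assumption.
    + apply (is_lim_seq_scal_l _ (INR k) (ln a - ln b)), harmonic_nflr_diff_lim; assumption.
Qed.

Theorem theorem3 (a b : R) (k : nat) :
  1 < a -> 1 < b -> irrational a -> irrational b -> (0 < k)%nat ->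
  let s := fun c (n : nat) => flr (c * INR n) in
  let s' := fun c (n : nat) => flr (/ c * INR n) in
  let u := fun n : nat =>
    s a (n + 1 + k)%nat / s a (n + 1)%nat - s b (n + 1 + k)%nat / s b (n + 1)%nat in
  let v := fun n : nat =>
    (a * INR k * frac (/ a * (INR (n + 1) + 1))
     - b * INR k * frac (/ b * (INR (n + 1) + 1)))
    / (INR (n + 1) * (INR (n + 1) + 1)) in
  let w := fun n : nat =>
    (sum1 k (fun j => frac (frac a * (s' a (n + 2)%nat + INR j)))
     - sum1 k (fun j => frac (frac b * (s' b (n + 2)%nat + INR j))))
    / (INR (n + 1) * (INR (n + 1) + 1)) in
  ex_series u /\ ex_series v /\ ex_series w /\
  Series u =
    INR k * (ln a - ln b)
    + sum1 k (fun j => frac (INR j * frac a) - frac (INR j * frac b))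
    - Series v - Series w.
Proof.
  (* The identity holds for [k = 0] as well. *)
  intros Ha Hb Hia Hib _ s s' u v w.
  assert (Hu_ext : forall n, ratio_term a k (S n) - ratio_term b k (S n) = u n)
    by (intros n; unfold u, s, ratio_term; rewrite Nat.add_1_r; ring).
  assert (Hv_ext : forall n, v_term a k (S n) - v_term b k (S n) = v n)
    by (intros n; unfold v, v_term; rewrite Nat.add_1_r; unfold Rdiv; ring).
  assert (Hw_ext : forall n, w_term a k (S n) - w_term b k (S n) = w n).
  { intros n. unfold w, s', w_term, frac_block. rewrite !INR_beatty_count by assumption.
    replace (n + 2)%nat with (S (S n)) by lia. rewrite Nat.add_1_r. unfold Rdiv. ring. }
  pose proof (is_series_ext _ _ _ Hu_ext (is_series_ratio_term_diff a b k Ha Hb Hia Hib)) as Hu.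
  pose proof (is_series_ext _ _ _ Hv_ext (is_series_minus _ _ _ _
    (Series_correct _ (ex_series_v_term a k Ha)) (Series_correct _ (ex_series_v_term b k Hb)))) as Hv.
  pose proof (is_series_ext _ _ _ Hw_ext (is_series_minus _ _ _ _
    (Series_correct _ (ex_series_w_term a k)) (Series_correct _ (ex_series_w_term b k)))) as Hw.
  split; [eexists; exact Hu|]. split; [eexists; exact Hv|]. split; [eexists; exact Hw|].
  rewrite (is_series_unique _ _ Hu), (is_series_unique _ _ Hv), (is_series_unique _ _ Hw).
  unfold ratio_sum_constant. rewrite sum1_minus, !frac_block_0 by assumption.
  change plus with Rplus. change opp with Ropp. ring.
Qed.
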